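(* Let $\mathcal{C}$ be an $(n,s)$-curve of genus $g$ and let $D_g$ be a non-special positive divisor of degree $g$ on the finite part of $\mathcal{C}$. Let $\mathcal{R}_{2g}$ be the polynomial function of weight $2g$ with $D_g\subset(\mathcal{R}_{2g})_0$, and let $D_g^\ast$ be the complement of $D_g$ in $(\mathcal{R}_{2g})_0$, i.e. $(\mathcal{R}_{2g})_0=D_g+D_g^\ast$. Then $D_g^\ast$ is the inverse of $D_g$: $D_g^\ast-g\infty\sim-(D_g-g\infty)$.
   Context: An $(n,s)$-curve ($\gcd(n,s)=1$) is a nonsingular plane curve $f(x,y)=-y^n+x^s+\sum_{ni+sj<ns,\ j\le n-1}\lambda_{ns-ni-sj}x^iy^j=0$ over $\mathbb{C}$ of genus $g=(n-1)(s-1)/2$ with one point $\infty$ at infinity. Sato weights: $\mathrm{wgt}\,x=n$, $\mathrm{wgt}\,y=s$. A polynomial function of weight $\mathfrak{w}$ is an element of $\mathbb{C}[x,y]/(f)$ that is a linear combination of monomials $x^iy^j$ ($j\le n-1$) of weight $ni+sj\le\mathfrak{w}$ with coefficient $1$ at the (unique) monomial of weight $\mathfrak{w}$; its divisor of zeros $(\mathcal{R})_0$ is the divisor of common solutions of $\mathcal{R}=0$, $f=0$, of degree $\mathfrak{w}$. Non-special means $\ell(K_{\mathcal{C}}-D_g)=0$. $\sim$ denotes linear equivalence. *)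

(* Plane (n,s)-curves over C := R[i] (R : realType),
   bivariate polynomials as {poly {poly C}}: for p, p`_j`_i is the
   coefficient of x^i y^j (outer variable = y, inner variable = x). *)
From mathcomp Require Import all_boot all_order all_algebra.
From mathcomp Require Import reals complex.
Set Implicit Arguments. Unset Strict Implicit. Unset Printing Implicit Defensive.
Import Order.TTheory GRing.Theory Num.Theory.
Local Open Scope ring_scope.

Section NSCurves.
Variable C : closedFieldType.

Definition bipoly := {poly {poly C}}.

Definition coef2 (p : bipoly) (i j : nat) : C := p`_j`_i.

Definition eval2 (p : bipoly) (a b : C) : C := (p.[b%:P]).[a].

Definition dX (p : bipoly) : bipoly := map_poly (fun c : {poly C} => c^`()) p.
Definition dY (p : bipoly) : bipoly := p^`().

Definition shift2 (p : bipoly) (a b : C) : bipoly :=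
  (map_poly (fun c : {poly C} => c \Po ('X + a%:P)) p) \Po ('X + (b%:P)%:P).

(* p belongs to the k-th power of the maximal ideal (x - a, y - b) *)
Definition in_mpow (a b : C) (k : nat) (p : bipoly) : Prop :=
  forall i j : nat, (i + j < k)%N -> coef2 (shift2 p a b) i j = 0.

Definition wgt (n s i j : nat) : nat := (n * i + s * j)%N.

Definition ns_curve (n s : nat) (f : bipoly) : Prop :=
  [/\ (0 < n)%N, (0 < s)%N & coprime n s] /\
  [/\ coef2 f s 0 = 1, coef2 f 0 n = -1,
      (forall i j : nat, (i, j) != (s, 0%N) -> (i, j) != (0%N, n) ->
          ~~ ((wgt n s i j < n * s)%N && (j <= n.-1)%N) -> coef2 f i j = 0)
    & (forall a b : C,
          ~ [/\ eval2 f a b = 0, eval2 (dX f) a b = 0 & eval2 (dY f) a b = 0])].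

Definition genus (n s : nat) : nat := ((n.-1 * s.-1)./2)%N.

Definition oncurve (f : bipoly) (P : C * C) : Prop := eval2 f P.1 P.2 = 0.

(* p is zero as a function on the curve, i.e. p lies in the ideal (f) *)
Definition divides (f p : bipoly) : Prop := exists q : bipoly, p = q * f.

(* order of vanishing of the polynomial function h at the affine point P
   of the curve (computed in the local ring O_P = C[x,y]_{m_P}/(f)) is k *)
Definition in_local_mpow (f : bipoly) (P : C * C) (k : nat) (h : bipoly) : Prop :=
  exists u q : bipoly, eval2 u P.1 P.2 != 0 /\ in_mpow P.1 P.2 k (u * h - q * f).

Definition ord_at (f : bipoly) (P : C * C) (h : bipoly) (k : nat) : Prop :=
  in_local_mpow f P k h /\ ~ in_local_mpow f P k.+1 h.

(* the polynomial function h (mod f) has Sato weight w, i.e. its reduced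
   representative (y-degree <= n-1) has top monomial of weight w;
   equivalently ord_infinity h = - w *)
Definition pweight (n s : nat) (f h : bipoly) (w : nat) : Prop :=
  exists r q : bipoly,
    [/\ h = r + q * f, (size r <= n)%N, r != 0,
        (exists i j : nat, coef2 r i j != 0 /\ wgt n s i j = w)
      & (forall i j : nat, coef2 r i j != 0 -> (wgt n s i j <= w)%N)].

Definition polyfun (n s w : nat) (R : bipoly) : Prop :=
  [/\ (size R <= n)%N,
      (forall i j : nat, coef2 R i j != 0 -> (wgt n s i j <= w)%N)
    & (forall i j : nat, (j <= n.-1)%N -> wgt n s i j = w -> coef2 R i j = 1)].

(* divisors: (multiplicities at affine points, multiplicity at infinity) *)
Definition divisor : Type := (((C * C) -> int) * int)%type.

Definition addD (D E : divisor) : divisor := (fun P => D.1 P + E.1 P, D.2 + E.2).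
Definition oppD (D : divisor) : divisor := (fun P => - D.1 P, - D.2).
Definition subD (D E : divisor) : divisor := addD D (oppD E).
Definition infD (k : int) : divisor := (fun _ => 0, k).

Definition is_divisor (f : bipoly) (D : divisor) : Prop :=
  (exists sp : seq (C * C), forall P, D.1 P != 0 -> P \in sp) /\
  (forall P, D.1 P != 0 -> oncurve f P).

Definition effective (D : divisor) : Prop := (forall P, 0 <= D.1 P) /\ 0 <= D.2.

Definition le_div (D E : divisor) : Prop := (forall P, D.1 P <= E.1 P) /\ D.2 <= E.2.

Definition has_degree (D : divisor) (d : int) : Prop :=
  exists sp : seq (C * C),
    [/\ uniq sp, (forall P, D.1 P != 0 -> P \in sp)
      & \sum_(P <- sp) D.1 P + D.2 = d].

Definition fun_div (n s : nat) (f p q : bipoly) (D : divisor) : Prop :=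
  [/\ ~ divides f p, ~ divides f q,
      (forall P, oncurve f P -> exists kp kq : nat,
          [/\ ord_at f P p kp, ord_at f P q kq & D.1 P = kp%:Z - kq%:Z]),
      (forall P, ~ oncurve f P -> D.1 P = 0)
    & (exists wp wq : nat,
          [/\ pweight n s f p wp, pweight n s f q wq & D.2 = wq%:Z - wp%:Z])].

Definition principal (n s : nat) (f : bipoly) (D : divisor) : Prop :=
  exists p q : bipoly, fun_div n s f p q D.

Definition lin_equiv (n s : nat) (f : bipoly) (D E : divisor) : Prop :=
  principal n s f (subD D E).

(* canonical divisor of an (n,s)-curve: the divisor (2g-2) infinity of the
   holomorphic differential dx / f_y *)
Definition canonical_div (n s : nat) : divisor := infD ((2 * genus n s)%:Z - 2).

(* non-special: l(K - D) = 0, i.e. no nonzero rational function h with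
   (h) + K - D >= 0 *)
Definition nonspecial (n s : nat) (f : bipoly) (D : divisor) : Prop :=
  forall (p q : bipoly) (E : divisor), fun_div n s f p q E ->
    ~ effective (subD (addD E (canonical_div n s)) D).

Definition zero_div (f R : bipoly) (Z : divisor) : Prop :=
  [/\ Z.2 = 0,
      (forall P, oncurve f P -> exists k : nat, ord_at f P R k /\ Z.1 P = k%:Z)
    & (forall P, ~ oncurve f P -> Z.1 P = 0)].

End NSCurves.
Arguments infD {C} k.
Arguments canonical_div {C} n s.

From mathcomp Require Import all_boot all_order all_algebra.
From mathcomp Require Import reals complex.
From mathcomp Require Import zify ring.
Import Order.TTheory GRing.Theory Num.Theory.
Local Open Scope ring_scope.
Set Implicit Arguments. Unset Strict Implicit.

(* A polynomial function R of weight w has its only pole at infinity, of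
   order w, so its divisor is (R)_0 - w infinity.  For w = 2g this reads
   (D_g^* - g infinity) + (D_g - g infinity) = (R_2g), a principal divisor.
   The only arithmetic input is that 2g = (n-1)(s-1), the conductor of the
   semigroup generated by n and s, is a Sato weight, so that R_2g really has
   a monomial of weight 2g.  Non-speciality of D_g is what guarantees the
   existence of R_2g; since R_2g is given, it is not used again. *)

Lemma wgt_ge_conductor n s m : (0 < n)%N -> coprime n s ->
  (n.-1 * s.-1 <= m)%N -> exists i j, (j <= n.-1)%N /\ wgt n s i j = m.
Proof.
move=> n_gt0 co_ns le_m.
(* x is a multiple of s congruent to m modulo n *)
pose x := chinese n s m 0.
have s_dvd_x : (s %| x)%N by rewrite /dvdn (chinese_modr co_ns) mod0n.
pose j := (x %/ s %% n)%N.
have sj_mod : (s * j = m %[mod n])%N.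
  by rewrite modnMmr mulnC divnK // (chinese_modl co_ns).
have j_le : (j <= n.-1)%N by rewrite -ltnS prednK ?ltn_pmod.
have sj_le_m : (s * j <= m)%N.
  rewrite leqNgt; apply/negP => lt_m.
  have : (n %| s * j - m)%N by rewrite -eqn_mod_dvd ?sj_mod // ltnW.
  have : (s * j - m < n)%N.
    by move: le_m j_le; rewrite -subn1 -[s.-1]subn1; nia.
  by move=> lt_n /dvdn_leq; rewrite subn_gt0 lt_m leqNgt lt_n => /(_ isT).
exists ((m - s * j) %/ n)%N, j; split => //.
by rewrite /wgt mulnC divnK ?subnK // -eqn_mod_dvd // sj_mod.
Qed.

Lemma double_genus n s : coprime n s -> (2 * genus n s = n.-1 * s.-1)%N.
Proof.
move=> co_ns; rewrite /genus mul2n -[RHS](odd_double_half (n.-1 * s.-1)).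
suff -> : odd (n.-1 * s.-1) = false by [].
apply/negP; rewrite oddM => /andP[odd_n odd_s].
have : (2 %| gcdn n s)%N.
  rewrite dvdn_gcd !dvdn2.
  by case: n odd_n {co_ns} => // n; case: s odd_s => // s /= -> ->.
by rewrite (eqP co_ns).
Qed.

Section BivariatePolynomials.
Variable C : closedFieldType.
Implicit Types (f p q h : bipoly C) (a b x y : C) (P : C * C).

Lemma eval2E p a b : eval2 p a b = (map_poly (horner_eval a) p).[b].
Proof. by rewrite /eval2 -[b in RHS](hornerC b a) horner_map. Qed.

Lemma eval21 a b : eval2 1 a b = 1.
Proof. by rewrite /eval2 !hornerC. Qed.

Lemma eval2B p q a b : eval2 (p - q) a b = eval2 p a b - eval2 q a b.
Proof. by rewrite /eval2 !hornerE. Qed.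

Lemma eval2M p q a b : eval2 (p * q) a b = eval2 p a b * eval2 q a b.
Proof. by rewrite /eval2 !hornerM. Qed.

Lemma coef2_00 p : coef2 p 0 0 = eval2 p 0 0.
Proof. by rewrite /coef2 /eval2 !horner_coef0. Qed.

Lemma eval2_shift2 p a b x y : eval2 (shift2 p a b) x y = eval2 p (x + a) (y + b).
Proof.
rewrite !eval2E /shift2 map_comp_poly horner_comp rmorphD /= map_polyX map_polyC.
rewrite /= horner_evalE hornerC !hornerE -map_poly_comp; congr (_.[_]).
by apply: eq_map_poly => c /=; rewrite !horner_evalE horner_comp !hornerE.
Qed.

Lemma ord_at1 f P : oncurve f P -> ord_at f P 1 0.
Proof.
move=> onP; split; first by exists 1, 0; rewrite eval21 oner_neq0.
case=> u [q [u_nz /(_ 0%N 0%N isT)]].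
rewrite coef2_00 eval2_shift2 !add0r eval2B !eval2M eval21 onP mulr0 subr0 mulr1.
by move/eqP: u_nz.
Qed.

Lemma ndivides_size f h : h != 0 -> (size h < size f)%N -> ~ divides f h.
Proof.
move=> + + [q def_h]; rewrite def_h mulf_eq0 negb_or => /andP[q_nz f_nz].
have q_gt0 : (0 < size q)%N by rewrite size_poly_gt0.
by rewrite size_mul // -(prednK q_gt0) addSn ltnNge leq_addl.
Qed.

Section PolynomialFunctions.
Variables (n s : nat) (f : bipoly C).

Lemma ns_curve_size : ns_curve n s f -> (n < size f)%N.
Proof.
case=> _ [_ f_0n _ _]; rewrite ltnNge; apply/negP => le_fn.
move: f_0n; rewrite /coef2 (nth_default _ le_fn) coef0 => /eqP.
by rewrite eq_sym oppr_eq0 oner_eq0.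
Qed.

Lemma pweight1 : (0 < n)%N -> pweight n s f 1 0.
Proof.
move=> n_gt0; exists 1, 0; split; rewrite ?mul0r ?addr0 ?size_poly1 ?oner_neq0 //.
  by exists 0%N, 0%N; rewrite /coef2 /wgt !coef1 /= oner_neq0 !muln0.
by move=> [|i] [|j]; rewrite /coef2 /wgt !coef1 /= ?coef0 ?coef1 ?eqxx ?muln0.
Qed.

Lemma fun_div_eq p q D E : D.1 =1 E.1 -> D.2 = E.2 ->
  fun_div n s f p q D -> fun_div n s f p q E.
Proof.
move=> eq_aff eq_inf [p_nz q_nz D_on D_off D_inf]; split=> //.
- by move=> P /D_on[kp [kq [ord_p ord_q D_P]]]; exists kp, kq; rewrite -eq_aff.
- by move=> P /D_off; rewrite eq_aff.
- by rewrite -eq_inf.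
Qed.

Section OfWeight.
Variables (w : nat) (R : bipoly C).
Hypotheses (w_wgt : exists i j, (j <= n.-1)%N /\ wgt n s i j = w)
           (R_polyfun : polyfun n s w R).

Lemma polyfun_top : exists i j, coef2 R i j = 1 /\ wgt n s i j = w.
Proof.
have [i [j [le_j wgt_ij]]] := w_wgt; case: R_polyfun => _ _ R_top.
by exists i, j; rewrite R_top.
Qed.

Lemma polyfun_neq0 : R != 0.
Proof.
have [i [j [R_ij _]]] := polyfun_top.
by apply: contra_eq_neq R_ij => ->; rewrite /coef2 !coef0 eq_sym oner_neq0.
Qed.

Lemma pweight_polyfun : pweight n s f R w.
Proof.
have [i [j [R_ij wgt_ij]]] := polyfun_top; case: R_polyfun => R_size R_wgt _.
exists R, 0; split; rewrite ?mul0r ?addr0 ?polyfun_neq0 //.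
by exists i, j; rewrite R_ij oner_neq0.
Qed.

Lemma fun_div_polyfun Z : (0 < n)%N -> (n < size f)%N -> zero_div f R Z ->
  fun_div n s f R 1 (subD Z (infD w)).
Proof.
move=> n_gt0 lt_nf [Z_inf Z_on Z_off]; case: R_polyfun => R_size _ _.
split.
- exact: ndivides_size polyfun_neq0 (leq_ltn_trans R_size lt_nf).
- by apply: ndivides_size; rewrite ?oner_neq0 ?size_poly1 ?(leq_ltn_trans n_gt0 lt_nf).
- move=> P onP; have [k [ord_k Z_k]] := Z_on P onP.
  exists k, 0%N; split; first exact: ord_k; first exact: ord_at1.
  by rewrite /= Z_k oppr0 !addr0.
- by move=> P offP; rewrite /= Z_off // oppr0 addr0.
- exists w, 0%N; split; first exact: pweight_polyfun; first exact: pweight1.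
  by rewrite /= Z_inf add0r.
Qed.
End OfWeight.
End PolynomialFunctions.
End BivariatePolynomials.

Theorem theorem1 (R : realType) (n s : nat) (f : {poly {poly R[i]}})
    (Dg : divisor R[i]) (R2g : {poly {poly R[i]}}) (Z : divisor R[i]) :
  ns_curve n s f ->
  is_divisor f Dg -> effective Dg -> Dg.2 = 0 ->
  has_degree Dg (genus n s)%:Z ->
  nonspecial n s f Dg ->
  polyfun n s (2 * genus n s) R2g ->
  zero_div f R2g Z ->
  le_div Dg Z ->
  let Dstar := subD Z Dg in
  lin_equiv n s f (subD Dstar (infD (genus n s)%:Z))
                  (oppD (subD Dg (infD (genus n s)%:Z))).
Proof.
move=> curve _ _ Dg_inf _ _ R_polyfun R_zeros _ Dstar.
have [[n_gt0 _ co_ns] _] := curve.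
have two_g_wgt : exists i j, (j <= n.-1)%N /\ wgt n s i j = (2 * genus n s)%N.
  by apply: wgt_ge_conductor; rewrite ?double_genus.
exists R2g, 1.
apply: fun_div_eq (fun_div_polyfun two_g_wgt R_polyfun n_gt0 (ns_curve_size curve) R_zeros).
- by move=> P /=; ring.
- by rewrite /= Dg_inf; lia.
Qed.
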